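(* Let $E\in\mathbb C$ not be an eigenvalue of $h$, and let $g(E)=(h-EI_{nm})^{-1}$ with $m\times m$ blocks $g_{i,j}$, $i,j=1,\dots,n$. Then $$\begin{pmatrix}0 & -B_n^{-1}\\ g_{n,1} & g_{n,n}\end{pmatrix}=T(E)\begin{pmatrix} g_{1,1} & g_{1,n}\\ -C_1^{-1} & 0\end{pmatrix},$$ the block $g_{1,n}$ is invertible, and $$T(E)=\begin{pmatrix}-B_n^{-1}g_{1,n}^{-1} & -B_n^{-1}g_{1,n}^{-1}g_{1,1}C_1\\ g_{n,n}g_{1,n}^{-1} & g_{n,n}g_{1,n}^{-1}g_{1,1}C_1-g_{n,1}C_1\end{pmatrix}.$$
   Context: Fix integers $m\ge 1$, $n\ge 2$ and matrices $A_k,B_k,C_k\in\mathbb C^{m\times m}$, $k=1,\dots,n$, with all $B_k,C_k$ invertible. For $E\in\mathbb C$ the one-step transfer matrices are $t_k(E)=\begin{pmatrix} B_k^{-1}(E I_m-A_k) & -B_k^{-1}C_k\\ I_m & 0\end{pmatrix}\in\mathbb C^{2m\times 2m}$ and the transfer matrix is $T(E)=t_n(E)\cdots t_1(E)$. The open-chain matrix $h\in\mathbb C^{nm\times nm}$ is the block tridiagonal matrix with diagonal blocks $h_{kk}=A_k$, superdiagonal blocks $h_{k,k+1}=B_k$, subdiagonal blocks $h_{k+1,k}=C_{k+1}$ ($k=1,\dots,n-1$), and all other blocks zero. *)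

From HB Require Import structures.
From mathcomp Require Import all_boot all_order all_algebra.
Set Implicit Arguments. Unset Strict Implicit. Unset Printing Implicit Defensive.
Import Order.TTheory GRing.Theory Num.Theory.
Local Open Scope ring_scope.

(* Block sequences are indexed 1-based by nat: A k, B k, C k for k = 1..n
   (values at other indices are irrelevant). *)

Section Chain.
Variable F : fieldType.
Variables (m n : nat).
Variables (A B C : nat -> 'M[F]_m).

Definition tstep (k : nat) (E : F) : 'M[F]_(m + m) :=
  block_mx (invmx (B k) *m (E%:M - A k)) (- (invmx (B k) *m C k))
           (1%:M) 0.

Fixpoint Tupto (k : nat) (E : F) : 'M[F]_(m + m) :=
  match k with
  | 0 => 1%:M
  | k'.+1 => tstep k'.+1 E *m Tupto k' E
  end.

Definition transfer (E : F) : 'M[F]_(m + m) := Tupto n E.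

(* open-chain block tridiagonal matrix h; global row index r lies in
   block r %/ m + 1 (1-based) at offset r %% m *)
Definition hchain : 'M[F]_(n * m) :=
  \matrix_(r < n * m, c < n * m)
    let i := ((r %/ m).+1)%N in let j := ((c %/ m).+1)%N in
    let a := (r %% m)%N in let b := (c %% m)%N in
    let get (M : 'M[F]_m) :=
      (match insub a, insub b with
       | Some a', Some b' => M a' b'
       | _, _ => 0 end) in
    if i == j then get (A i)
    else if j == i.+1 then get (B i)
    else if i == j.+1 then get (C i)
    else 0.
End Chain.

(* entry of an N x N matrix at nat indices (0 outside the range) *)
Definition natentry (F : fieldType) (N : nat) (M : 'M[F]_N) (r c : nat) : F :=
  match insub r, insub c with
  | Some r', Some c' => M r' c'
  | _, _ => 0
  end.

Definition mblock (F : fieldType) (n m : nat) (M : 'M[F]_(n * m)) (i j : nat)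
  : 'M[F]_m :=
  \matrix_(a < m, b < m) natentry M (i.-1 * m + a)%N (j.-1 * m + b)%N.

From HB Require Import structures.
From mathcomp Require Import all_boot all_order all_algebra zify.
Set Implicit Arguments. Unset Strict Implicit. Unset Printing Implicit Defensive.
Import GRing.Theory.
Local Open Scope ring_scope.

(* Write H = h - E and g = H^-1, with m x m blocks g_{k,j}.  Block row k of
   H g = 1 reads  C_k g_{k-1,j} + (A_k - E) g_{k,j} + B_k g_{k+1,j} = delta_kj,
   where the terms with k-1 = 0 or k+1 = n+1 are absent.  For j = 1 and j = n
   the source delta_kj sits at an end of the chain, so it can be absorbed by
   adding ghost values g_{0,j}, g_{n+1,j}: column 1 extended by
   g_{0,1} = -C_1^-1, g_{n+1,1} = 0, and column n extended by g_{0,n} = 0,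
   g_{n+1,n} = -B_n^-1, satisfy the homogeneous three-term recurrence at every
   k = 1..n.  Solutions of that recurrence are propagated by the transfer
   matrices: T (u_1; u_0) = (u_{n+1}; u_n).  Applied to the two extended
   columns this is the first identity.  Its top-left block gives
   (T_11) g_{1,n} = -B_n^-1, so g_{1,n} is invertible; then the 2x2 block matrix
   on the right of the first identity has an explicit inverse, which yields
   the formula for T. *)

Lemma natentryE (F : fieldType) N (M : 'M[F]_N) (r c : 'I_N) :
  natentry M r c = M r c.
Proof. by rewrite /natentry !valK. Qed.

Lemma natentry_ord (F : fieldType) N (M : 'M[F]_N) r c
    (hr : (r < N)%N) (hc : (c < N)%N) :
  natentry M r c = M (Ordinal hr) (Ordinal hc).
Proof. by rewrite -natentryE. Qed.

Lemma natentryB (F : fieldType) N (M M' : 'M[F]_N) r c :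
  natentry (M - M') r c = natentry M r c - natentry M' r c.
Proof.
rewrite /natentry; case: (insub r : option 'I_N) => [r'|];
  case: (insub c : option 'I_N) => [c'|] //=; by rewrite ?mxE ?subr0.
Qed.

Lemma mblockB (F : fieldType) n m (M M' : 'M[F]_(n * m)) i j :
  mblock (M - M') i j = mblock M i j - mblock M' i j.
Proof. by apply/matrixP => a b; rewrite !mxE natentryB. Qed.

Lemma block_index_lt n m k (a : 'I_m) :
  (1 <= k <= n)%N -> (k.-1 * m + a < n * m)%N.
Proof. move=> /andP[k1 kn]; have := ltn_ord a; nia. Qed.

Lemma block_index_div m k (a : 'I_m) : ((k.-1 * m + a) %/ m = k.-1)%N.
Proof.
have m_gt0 : (0 < m)%N by case: a; case: m.
by rewrite divnMDl // divn_small ?addn0.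
Qed.

Lemma block_index_mod m k (a : 'I_m) : ((k.-1 * m + a) %% m = a)%N.
Proof. by rewrite modnMDl modn_small. Qed.

Lemma sum_blocks m (V : nmodType) n (f : nat -> V) :
  \sum_(c < n * m) f c = \sum_(l < n) \sum_(d < m) f (l * m + d)%N.
Proof.
elim: n => [|n IH]; first by rewrite mul0n !big_ord0.
rewrite big_ord_recr /= -IH mulSnr -!(big_mkord xpredT) /=.
rewrite (big_cat_nat _ (n := (n * m)%N)) ?leq_addr //=; congr (_ + _).
rewrite -{1}(add0n (n * m)%N) big_addn addKn big_mkord.
by apply: eq_bigr => d _; rewrite addnC.
Qed.

Lemma mblock_mul (F : fieldType) n m (X Y : 'M[F]_(n * m)) i j :
  (1 <= i <= n)%N -> (1 <= j <= n)%N ->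
  mblock (X *m Y) i j = \sum_(l < n) mblock X i l.+1 *m mblock Y l.+1 j.
Proof.
move=> hi hj; apply/matrixP => a b.
have hr := block_index_lt a hi; have hs := block_index_lt b hj.
rewrite summxE !mxE (natentry_ord _ hr hs) mxE.
under eq_bigr => c _ do rewrite -(natentryE X) -(natentryE Y).
rewrite (sum_blocks m n (fun c => natentry X (i.-1 * m + a) c *
                                  natentry Y c (j.-1 * m + b))).
by apply: eq_bigr => l _; rewrite mxE; apply: eq_bigr => d _; rewrite !mxE.
Qed.

Lemma mblock_hchain (F : fieldType) n m (A B C : nat -> 'M[F]_m) k l :
  (1 <= k <= n)%N -> (1 <= l <= n)%N ->
  mblock (hchain n A B C) k l =
  if k == l then A k else if l == k.+1 then B k
  else if k == l.+1 then C k else 0.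
Proof.
move=> hk hl; apply/matrixP => a b.
have hr := block_index_lt a hk; have hs := block_index_lt b hl.
rewrite mxE (natentry_ord _ hr hs) mxE /=.
rewrite !block_index_div !block_index_mod !valK !prednK; try lia.
by case: ifP => _; [|case: ifP => _; [|case: ifP => _]]; rewrite ?mxE.
Qed.

Lemma mblock_scalar (F : fieldType) n m (x : F) k l :
  (1 <= k <= n)%N -> (1 <= l <= n)%N ->
  mblock (x%:M : 'M[F]_(n * m)) k l = if k == l then x%:M else 0.
Proof.
move=> hk hl; apply/matrixP => a b.
have hr := block_index_lt a hk; have hs := block_index_lt b hl.
rewrite mxE (natentry_ord _ hr hs) !mxE.
have -> : (Ordinal hr == Ordinal hs) = (k.-1 * m + a == l.-1 * m + b)%N by [].
have [-> | neq_kl] := eqVneq k l; first by rewrite mxE eqn_add2l.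
rewrite mxE; case: eqP => // /(congr1 (fun r => r %/ m)%N).
by rewrite !block_index_div => e; case/eqP: neq_kl; lia.
Qed.

Lemma mblock_shifted_chain (F : fieldType) n m (A B C : nat -> 'M[F]_m)
    (E : F) k l :
  (1 <= k <= n)%N -> (l < n)%N ->
  mblock (hchain n A B C - E%:M) k l.+1 =
  (if k == (l + 1)%N then A k - E%:M else 0) +
  (if k == (l + 0)%N then B k else 0) +
  (if k == (l + 2)%N then C k else 0).
Proof.
move=> hk hl; rewrite mblockB mblock_hchain // mblock_scalar //.
rewrite addn0 !addn2 addn1.
have [-> | ne1] := eqVneq k l.+1.
  by rewrite gtn_eqF // ltn_eqF // !addr0.
rewrite subr0 eqSS; have [-> | ne0] := eqVneq l k.
  by rewrite ltn_eqF // addr0 add0r.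
by rewrite !add0r.
Qed.

Lemma sum_shift (V : nmodType) n d k (f : nat -> V) :
  \sum_(l < n) (if k == (l + d)%N then f l else 0) =
  if (d <= k < n + d)%N then f (k - d)%N else 0.
Proof.
case: ifP => hk.
  have hl : (k - d < n)%N by lia.
  rewrite (bigD1 (Ordinal hl)) //= subnK ?eqxx; last by lia.
  rewrite big1 ?addr0 // => i neq; case: eqP => // e.
  by case/eqP: neq; apply: val_inj => /=; lia.
by apply: big1 => i _; case: eqP => // e; have := ltn_ord i; lia.
Qed.

Lemma green_block_row (F : fieldType) n m (A B C : nat -> 'M[F]_m) (E : F)
    (g : 'M[F]_(n * m)) (hg : (hchain n A B C - E%:M) *m g = 1%:M) k j :
  (1 <= k <= n)%N -> (1 <= j <= n)%N ->
  (if (1 < k)%N then C k *m mblock g k.-1 j else 0) +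
  (A k - E%:M) *m mblock g k j +
  (if (k < n)%N then B k *m mblock g k.+1 j else 0) =
  if k == j then 1%:M else 0.
Proof.
move=> hk hj; have := congr1 (fun M => mblock M k j) hg.
rewrite /= mblock_mul // mblock_scalar // => <-.
under eq_bigr => l _ do
  rewrite mblock_shifted_chain ?ltn_ord // !mulmxDl
          !(fun_if (mulmx^~ (mblock g l.+1 j))) !mul0mx.
rewrite !big_split /=.
rewrite (sum_shift n 1 k (fun i => (A k - E%:M) *m mblock g i.+1 j)).
rewrite (sum_shift n 0 k (fun i => B k *m mblock g i.+1 j)).
rewrite (sum_shift n 2 k (fun i => C k *m mblock g i.+1 j)).
have diag_in : (0 < k < n + 1)%N by lia.
have sub_in : (k < n + 2)%N by lia.
rewrite diag_in sub_in andbT.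
rewrite subn1 prednK ?subn0 ?addn0 //; last by case/andP: hk.
rewrite [_ + (A k - _) *m _]addrC addrAC; congr (_ + _).
by case: ifP => // hk1; rewrite (_ : (k - 2).+1 = k.-1) //; lia.
Qed.

Lemma tstep_col (F : fieldType) m p (A B C : nat -> 'M[F]_m) k (E : F)
    (X Y : 'M[F]_(m, p)) :
  tstep A B C k E *m col_mx X Y =
  col_mx (invmx (B k) *m ((E%:M - A k) *m X - C k *m Y)) X.
Proof.
by rewrite /tstep mul_block_col mul1mx mul0mx addr0 mulNmx -!mulmxA -mulmxBr.
Qed.

Lemma recurrence_solve (F : fieldType) m p (A B C : 'M[F]_m) (E : F)
    (X Y Z : 'M[F]_(m, p)) :
  B \in unitmx -> C *m Y + (A - E%:M) *m X + B *m Z = 0 ->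
  invmx B *m ((E%:M - A) *m X - C *m Y) = Z.
Proof.
move=> unit_B /eqP; rewrite addrC addr_eq0 => /eqP BZ.
by rewrite -[Z](mulKmx unit_B) BZ opprD -[- (_ *m X)]mulNmx opprB addrC.
Qed.

Lemma transfer_propagates (F : fieldType) m p (A B C : nat -> 'M[F]_m)
    (E : F) (u : nat -> 'M[F]_(m, p)) k :
  (forall i, (1 <= i <= k)%N -> B i \in unitmx) ->
  (forall i, (1 <= i <= k)%N ->
     C i *m u i.-1 + (A i - E%:M) *m u i + B i *m u i.+1 = 0) ->
  Tupto A B C k E *m col_mx (u 1%N) (u 0%N) = col_mx (u k.+1) (u k).
Proof.
elim: k => [|k IH] unit_B rec; first by rewrite mul1mx.
have IHk : Tupto A B C k E *m col_mx (u 1%N) (u 0%N) = col_mx (u k.+1) (u k).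
  by apply: IH => i hi; [apply: unit_B | apply: rec]; lia.
rewrite /= -mulmxA IHk tstep_col (recurrence_solve (Z := u k.+2)) //.
- by apply: unit_B; lia.
- by apply: rec; lia.
Qed.

(* Columns of the Green's function extended by ghost blocks at positions 0
   and n + 1; with suitable ghosts, the end-of-chain columns satisfy the
   homogeneous recurrence at every block row. *)
Definition green_column (F : fieldType) n m (g : 'M[F]_(n * m)) j
    (u0 un1 : 'M[F]_m) (k : nat) : 'M[F]_m :=
  if k == 0%N then u0 else if k == n.+1 then un1 else mblock g k j.

Section EndColumns.
Variables (F : fieldType) (n m : nat) (A B C : nat -> 'M[F]_m) (E : F).
Variable g : 'M[F]_(n * m).
Hypothesis hg : (hchain n A B C - E%:M) *m g = 1%:M.
Hypothesis n_gt1 : (1 < n)%N.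
Hypothesis unit_B : forall k, (1 <= k <= n)%N -> B k \in unitmx.

Variables (j : nat) (u0 un1 : 'M[F]_m).
Hypothesis j_end : (j == 1%N) || (j == n).
Hypothesis ghost0 : C 1%N *m u0 = - (if 1%N == j then 1%:M else 0).
Hypothesis ghostn1 : B n *m un1 = - (if n == j then 1%:M else 0).

Let u := green_column g j u0 un1.

Lemma green_column_recurrence k : (1 <= k <= n)%N ->
  C k *m u k.-1 + (A k - E%:M) *m u k + B k *m u k.+1 = 0.
Proof.
move=> hk; have hj : (1 <= j <= n)%N by case/orP: j_end => /eqP ->; lia.
have inner i : (1 <= i <= n)%N -> u i = mblock g i j.
  by move=> hi; rewrite /u /green_column ifF ?ifF //; apply/eqP; lia.
have := green_block_row hg hk hj.
have [-> /= | k_ne1] := eqVneq k 1%N.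
  rewrite n_gt1 (inner 1%N) ?(inner 2%N) //; try lia.
  have -> : u 0%N = u0 by [].
  by rewrite ghost0 => <-; rewrite add0r -addrA addNr.
have [-> | k_nen] := eqVneq k n.
  rewrite ltnn n_gt1 addr0 (inner n) ?(inner n.-1) //; try lia.
  have -> : u n.+1 = un1 by rewrite /u /green_column eqxx.
  by rewrite ghostn1 => <-; rewrite subrr.
have [k_gt1 k_ltn] : (1 < k)%N /\ (k < n)%N by lia.
have k_ne_j : (k == j) = false by apply/eqP; case/orP: j_end => /eqP; lia.
by rewrite k_gt1 k_ltn k_ne_j !inner //; lia.
Qed.

Lemma transfer_end_column :
  transfer n A B C E *m col_mx (mblock g 1 j) u0 = col_mx un1 (mblock g n j).
Proof.
have := transfer_propagates unit_B green_column_recurrence.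
rewrite /u /green_column /= eqxx !ifF //; apply/eqP; lia.
Qed.

End EndColumns.

Lemma not_eigenvalue_unit (F : fieldType) N (M : 'M[F]_N) (E : F) :
  ~~ eigenvalue M E -> M - E%:M \in unitmx.
Proof. by rewrite -row_free_unit -kermx_eq0 => /negbNE. Qed.

(* If a 2x2 block matrix sends (X; 0) to (Y; Z) with Y left invertible, then X
   is invertible: the top-left block times X equals Y. *)
Lemma top_block_unit (F : fieldType) m (T : 'M[F]_(m + m))
    (X Y Z W : 'M[F]_m) :
  W *m Y = 1%:M -> T *m col_mx X 0 = col_mx Y Z -> X \in unitmx.
Proof.
move=> WY /(congr1 usubmx).
rewrite -[T in T *m _]submxK mul_block_col !col_mxKu mulmx0 addr0 => top.
have : (W *m ulsubmx T) *m X = 1%:M by rewrite -mulmxA top.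
by case/mulmx1_unit.
Qed.

Lemma end_blocks_inverse (F : fieldType) m (G11 G1n C : 'M[F]_m) :
  G1n \in unitmx -> C \in unitmx ->
  block_mx G11 G1n (- invmx C) 0 *m
  block_mx 0 (- C) (invmx G1n) (invmx G1n *m G11 *m C) = 1%:M.
Proof.
move=> unit_G1n unit_C; rewrite mulmx_block !mulmx0 !mul0mx !addr0 !add0r.
rewrite mulmxV // !mulmxN mulNmx opprK mulVmx // !mulmxA mulmxV // mul1mx addNr.
by rewrite [RHS]scalar_mx_block.
Qed.

Theorem proposition5 (F : fieldType) (m n : nat)
  (A B C : nat -> 'M[F]_m)
  (hm : (1 <= m)%N) (hn : (2 <= n)%N)
  (hB : forall k, (1 <= k <= n)%N -> B k \in unitmx)
  (hC : forall k, (1 <= k <= n)%N -> C k \in unitmx)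
  (E : F)
  (hE : ~~ eigenvalue (hchain n A B C) E) :
  let g := invmx (hchain n A B C - E%:M) in
  let gb := mblock g in
  let T := transfer n A B C E in
  [/\ block_mx 0 (- invmx (B n)) (gb n 1%N) (gb n n)
        = T *m block_mx (gb 1%N 1%N) (gb 1%N n) (- invmx (C 1%N)) 0,
      gb 1%N n \in unitmx
    & T = block_mx (- (invmx (B n) *m invmx (gb 1%N n)))
                   (- (invmx (B n) *m invmx (gb 1%N n) *m gb 1%N 1%N *m C 1%N))
                   (gb n n *m invmx (gb 1%N n))
                   (gb n n *m invmx (gb 1%N n) *m gb 1%N 1%N *m C 1%N
                      - gb n 1%N *m C 1%N)].
Proof.
move=> g gb T.
have hg : (hchain n A B C - E%:M) *m g = 1%:M.
  by rewrite mulmxV ?not_eigenvalue_unit.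
have unit_Bn : B n \in unitmx by apply: hB; lia.
have unit_C1 : C 1%N \in unitmx by apply: hC; lia.
have n_ne1 : (n == 1%N) = false by apply/eqP; lia.
have col1 : T *m col_mx (gb 1%N 1%N) (- invmx (C 1%N)) = col_mx 0 (gb n 1%N).
  apply: (transfer_end_column (j := 1%N) hg hn hB) => //.
  - by rewrite mulmxN mulmxV.
  - by rewrite n_ne1 mulmx0 oppr0.
have coln : T *m col_mx (gb 1%N n) 0 = col_mx (- invmx (B n)) (gb n n).
  apply: (transfer_end_column (j := n) hg hn hB); rewrite ?eqxx ?orbT //.
  - by rewrite eq_sym n_ne1 mulmx0 oppr0.
  - by rewrite mulmxN mulmxV.
have first_identity : block_mx 0 (- invmx (B n)) (gb n 1%N) (gb n n)
        = T *m block_mx (gb 1%N 1%N) (gb 1%N n) (- invmx (C 1%N)) 0.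
  by rewrite !block_mxEh mul_mx_row col1 coln.
have unit_g1n : gb 1%N n \in unitmx.
  apply: (top_block_unit (W := - B n) _ coln).
  by rewrite mulNmx mulmxN opprK mulmxV.
split=> //.
rewrite -[T]mulmx1 -(end_blocks_inverse (gb 1%N 1%N) unit_g1n unit_C1).
rewrite mulmxA -first_identity mulmx_block !mulmx0 !mul0mx !add0r.
by rewrite !mulNmx !mulmxN !mulmxA addrC.
Qed.
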